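(* Let $A\in\mathcal{C}_n$ and let $w\in\mathbb{R}^n$ be nonzero. Then $A$ is irreducible with respect to $ww^T$ if and only if there exists a zero $u$ of $A$ with $w^Tu\ne0$.
   Context: $\mathcal{C}_n$ denotes the cone of copositive matrices: real symmetric $n\times n$ matrices $A$ with $x^TAx\ge 0$ for all $x\in\mathbb{R}^n_+$. For a matrix $M$, $A$ is irreducible with respect to $M$ if there does not exist $\gamma>0$ with $A-\gamma M\in\mathcal{C}_n$ (for $M\ne0$). A zero of $A$ is a nonzero $u\in\mathbb{R}^n_+$ with $u^TAu=0$. *)

(* real numbers are Stdlib's R.
   Vectors in R^n are functions nat -> R (only indices 0..n-1 matter),
   n x n matrices are functions nat -> nat -> R. *)
From Stdlib Require Import Reals.
Open Scope R_scope.

Fixpoint rsum (n : nat) (f : nat -> R) : R :=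
  match n with
  | O => 0
  | S k => rsum k f + f k
  end.

Definition quad (n : nat) (A : nat -> nat -> R) (x : nat -> R) : R :=
  rsum n (fun i => rsum n (fun j => x i * A i j * x j)).

Definition dot (n : nat) (w u : nat -> R) : R := rsum n (fun i => w i * u i).

Definition symmetric (n : nat) (A : nat -> nat -> R) : Prop :=
  forall i j, (i < n)%nat -> (j < n)%nat -> A i j = A j i.

Definition nonneg_vec (n : nat) (x : nat -> R) : Prop :=
  forall i, (i < n)%nat -> 0 <= x i.

Definition nonzero_vec (n : nat) (x : nat -> R) : Prop :=
  exists i, (i < n)%nat /\ x i <> 0.

Definition copositive (n : nat) (A : nat -> nat -> R) : Prop :=
  symmetric n A /\ forall x, nonneg_vec n x -> 0 <= quad n A x.

Definition outer (w : nat -> R) : nat -> nat -> R := fun i j => w i * w j.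

Definition mat_sub_scal (A : nat -> nat -> R) (gamma : R) (M : nat -> nat -> R)
  : nat -> nat -> R := fun i j => A i j - gamma * M i j.

Definition irreducible_wrt (n : nat) (A M : nat -> nat -> R) : Prop :=
  ~ (exists gamma, 0 < gamma /\ copositive n (mat_sub_scal A gamma M)).

Definition is_zero_of (n : nat) (A : nat -> nat -> R) (u : nat -> R) : Prop :=
  nonneg_vec n u /\ nonzero_vec n u /\ quad n A u = 0.

(* Write q(x) = x^T A x.  Since x^T (A - g w w^T) x = q(x) - g (w^T x)^2, the matrix
   A - g w w^T is copositive iff g (w^T x)^2 <= q(x) for all x >= 0.  Hence a zero u
   of A with w^T u <> 0 rules out every g > 0.  Conversely, assume every zero of A
   is orthogonal to w.  We prove, by induction on the size of a support set l, that
   some g > 0 gives g (w^T x)^2 <= q(x) for all x >= 0 supported in l: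
   - if no zero of A is supported in l, q is positive on the compact face of the
     standard simplex spanned by l, so q(x) >= c (sum_i x_i)^2 there with c > 0,
     and (w^T x)^2 <= (sum_i |w_i|)^2 (sum_i x_i)^2 concludes;
   - otherwise pick such a zero u.  Copositivity forces u^T A y >= 0 for y >= 0,
     so q(y) >= q(y - t u) for t >= 0; with t = min y_i / u_i the vector y - t u is
     nonnegative, has smaller support, and the same pairing with w. *)

From Stdlib Require Import Reals Lra Lia List Wf_nat Classical.
From mathcomp Require all_boot all_order all_algebra.
From mathcomp Require all_classical all_reals all_analysis Rstruct Rstruct_topology.
Open Scope R_scope.

Lemma rsum_ext n f g : (forall i, (i < n)%nat -> f i = g i) -> rsum n f = rsum n g.
Proof.
  induction n as [|n IH]; intros H; simpl; [reflexivity|].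
  rewrite IH, H by auto with arith. reflexivity.
Qed.

Lemma rsum_zero n f : (forall i, (i < n)%nat -> f i = 0) -> rsum n f = 0.
Proof.
  intros H. rewrite (rsum_ext n f (fun _ => 0)) by exact H.
  induction n as [|n IH]; simpl; [reflexivity|]. rewrite IH by auto. ring.
Qed.

Lemma rsum_plus n f g : rsum n (fun i => f i + g i) = rsum n f + rsum n g.
Proof. induction n as [|n IH]; simpl; [ring|]. rewrite IH. ring. Qed.

Lemma rsum_scal n c f : rsum n (fun i => c * f i) = c * rsum n f.
Proof. induction n as [|n IH]; simpl; [ring|]. rewrite IH. ring. Qed.

Lemma rsum_le n f g : (forall i, (i < n)%nat -> f i <= g i) -> rsum n f <= rsum n g.
Proof.
  induction n as [|n IH]; intros H; simpl; [lra|].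
  assert (rsum n f <= rsum n g) by (apply IH; auto with arith).
  assert (f n <= g n) by auto with arith. lra.
Qed.

Lemma rsum_nonneg n f : (forall i, (i < n)%nat -> 0 <= f i) -> 0 <= rsum n f.
Proof.
  intros H. rewrite <- (rsum_zero n (fun _ => 0)) by reflexivity.
  apply rsum_le. exact H.
Qed.

Lemma rsum_ge_term n f i :
  (forall k, (k < n)%nat -> 0 <= f k) -> (i < n)%nat -> f i <= rsum n f.
Proof.
  induction n as [|n IH]; intros H Hi; simpl; [lia|].
  assert (0 <= rsum n f) by (apply rsum_nonneg; auto with arith).
  destruct (Nat.eq_dec i n) as [->|Hne]; [lra|].
  assert (f i <= rsum n f) by (apply IH; [auto with arith|lia]).
  assert (0 <= f n) by auto with arith. lra.
Qed.

Lemma rsum_abs n f : Rabs (rsum n f) <= rsum n (fun i => Rabs (f i)).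
Proof.
  induction n as [|n IH]; simpl; [rewrite Rabs_R0; lra|].
  eapply Rle_trans; [apply Rabs_triang|lra].
Qed.

Lemma rsum_swap n m f :
  rsum n (fun i => rsum m (fun j => f i j)) = rsum m (fun j => rsum n (fun i => f i j)).
Proof.
  induction n as [|n IH]; simpl.
  - symmetry; apply rsum_zero; reflexivity.
  - rewrite IH, <- rsum_plus. reflexivity.
Qed.

Lemma rsum_nonzero_term n f : rsum n f <> 0 -> exists i, (i < n)%nat /\ f i <> 0.
Proof.
  intros H. apply NNPP; intros Hno. apply H, rsum_zero.
  intros i Hi. apply NNPP; intros Hfi. apply Hno. exists i; auto.
Qed.

Definition bil (n : nat) (A : nat -> nat -> R) (x y : nat -> R) : R :=
  rsum n (fun i => rsum n (fun j => x i * A i j * y j)).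

Lemma bil_sym n A x y : symmetric n A -> bil n A x y = bil n A y x.
Proof.
  intros HS. unfold bil. rewrite rsum_swap. apply rsum_ext; intros i Hi.
  apply rsum_ext; intros j Hj. rewrite (HS j i) by auto. ring.
Qed.

Lemma quad_shift n A x v s : symmetric n A ->
  quad n A (fun k => x k + s * v k) = quad n A x + 2 * s * bil n A x v + s^2 * quad n A v.
Proof.
  intros HS.
  replace (2 * s * bil n A x v) with (s * bil n A x v + s * bil n A v x)
    by (rewrite (bil_sym n A v x HS); ring).
  unfold quad, bil. rewrite <- !rsum_scal, <- !rsum_plus. apply rsum_ext; intros i Hi.
  rewrite <- !rsum_scal, <- !rsum_plus. apply rsum_ext; intros j Hj. ring.
Qed.

Lemma quad_scal n A x c : quad n A (fun k => c * x k) = c^2 * quad n A x.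
Proof.
  unfold quad. rewrite <- rsum_scal. apply rsum_ext; intros i Hi.
  rewrite <- rsum_scal. apply rsum_ext; intros j Hj. ring.
Qed.

Lemma dot_shift n w x v s : dot n w (fun k => x k + s * v k) = dot n w x + s * dot n w v.
Proof. unfold dot. rewrite <- rsum_scal, <- rsum_plus. apply rsum_ext; intros; ring. Qed.

Lemma quad_sub_outer n A w g x :
  quad n (mat_sub_scal A g (outer w)) x = quad n A x - g * (dot n w x)^2.
Proof.
  assert (Hsq : (dot n w x)^2 = rsum n (fun i => rsum n (fun j => x i * outer w i j * x j))).
  { unfold dot, outer. simpl. rewrite Rmult_1_r, <- rsum_scal.
    apply rsum_ext; intros i Hi. rewrite Rmult_comm, <- rsum_scal.
    apply rsum_ext; intros; ring. }
  rewrite Hsq. replace (_ - g * _) with (quad n A x + (- g) * rsum n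
    (fun i => rsum n (fun j => x i * outer w i j * x j))) by ring.
  unfold quad. rewrite <- rsum_scal, <- rsum_plus. apply rsum_ext; intros i Hi.
  rewrite <- rsum_scal, <- rsum_plus. apply rsum_ext; intros j Hj.
  unfold mat_sub_scal. ring.
Qed.

(* If u is a zero of the copositive A, then u^T A y >= 0 for every y >= 0:
   otherwise q(u + s y) = 2 s u^T A y + s^2 q(y) would be negative for small s > 0. *)
Lemma zero_pairing_nonneg n A u y : copositive n A ->
  nonneg_vec n u -> quad n A u = 0 -> nonneg_vec n y -> 0 <= bil n A u y.
Proof.
  intros [HS HC] Hu Hq Hy.
  apply Rnot_lt_le; intros Hb.
  set (b := bil n A u y) in *. set (Q := quad n A y).
  assert (HQ : 0 <= Q) by (apply HC, Hy).
  set (s := - b / (Q + 1)).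
  assert (Hs : 0 < s) by (unfold s; apply Rdiv_lt_0_compat; lra).
  assert (HsQ : s * (Q + 1) = - b) by (unfold s; field; lra).
  assert (Hnn : nonneg_vec n (fun k => u k + s * y k)).
  { intros k Hk. pose proof (Hu k Hk). pose proof (Hy k Hk). nra. }
  pose proof (HC _ Hnn) as Hpos.
  rewrite quad_shift, Hq in Hpos by exact HS. fold b Q in Hpos.
  nra.
Qed.

Lemma dot_abs_le n w x : nonneg_vec n x ->
  Rabs (dot n w x) <= rsum n (fun i => Rabs (w i)) * rsum n x.
Proof.
  intros Hx. eapply Rle_trans; [apply rsum_abs|].
  rewrite Rmult_comm, <- rsum_scal. apply rsum_le; intros i Hi.
  rewrite Rabs_mult, (Rabs_right (x i)) by (apply Rle_ge, Hx, Hi).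
  rewrite Rmult_comm. apply Rmult_le_compat_r; [apply Rabs_pos|].
  apply rsum_ge_term; [exact Hx|exact Hi].
Qed.

Definition supported (n : nat) (S : nat -> Prop) (x : nat -> R) : Prop :=
  forall i, (i < n)%nat -> ~ S i -> x i = 0.

Definition face (n : nat) (S : nat -> Prop) (x : nat -> R) : Prop :=
  (forall i, (i < n)%nat -> 0 <= x i <= 1) /\ supported n S x /\ rsum n x = 1.

(* A face is compact, so a quadratic form positive on it is bounded below there
   by a positive constant.  The face is realised as a closed subset of a product
   of compact intervals in the row space 'rV_n of MathComp-Analysis, on which
   the quadratic form is continuous. *)
Module FaceCompactness.
Import all_boot all_order all_algebra all_classical all_reals all_analysis.
Import Rstruct Rstruct_topology.
Import Order.TTheory GRing.Theory Num.Theory.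
Local Open Scope classical_set_scope.
Local Open Scope ring_scope.

Lemma rsum_big (f : nat -> R) n : rsum n f = \sum_(i < n) f i.
Proof.
elim: n => [|k IH] /=; first by rewrite big_ord0.
by rewrite big_ord_recr /= IH.
Qed.

Lemma face_quad_min n (A : nat -> nat -> R) (S : nat -> Prop) :
  (forall x, face n S x -> Rlt 0 (quad n A x)) ->
  exists c, Rlt 0 c /\ forall x, face n S x -> Rle c (quad n A x).
Proof.
move=> Hpos.
pose Q (v : 'rV[R]_n) := \sum_(i < n) \sum_(j < n) v ord0 i * A i j * v ord0 j.
pose xv (v : 'rV[R]_n) : nat -> R :=
  fun k => if (insub k : option 'I_n) is Some i then v ord0 i else 0.
have xvE v (i : 'I_n) : xv v i = v ord0 i by rewrite /xv valK.
have QE v : quad n A (xv v) = Q v.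
  rewrite /quad rsum_big; apply: eq_bigr => i _.
  by rewrite rsum_big; apply: eq_bigr => j _; rewrite !xvE.
have QrowE x : Q (\row_(i < n) x (i : nat)) = quad n A x.
  rewrite /quad rsum_big; apply: eq_bigr => i _.
  by rewrite rsum_big; apply: eq_bigr => j _; rewrite !mxE.
pose Ci (i : 'I_n) : set R := if pselect (S i) then `[0, 1]%classic else [set 0].
pose K := [set v : 'rV[R]_n | forall i, Ci i (v ord0 i)] `&`
          [set v : 'rV[R]_n | \sum_(i < n) v ord0 i = 1].
have sum_cont : continuous (fun v : 'rV[R]_n => \sum_(i < n) v ord0 i).
  move=> v; apply: (@continuous_big R^o 'I_n +%R 0 xpredT add_continuous)=> i _.
  exact: coord_continuous.
have cK : compact K.
  apply: compact_closedI.
    by apply: rV_compact => i; rewrite /Ci; case: pselect => Si;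
      [exact: segment_compact | exact: compact_set1].
  have -> : [set v : 'rV[R]_n | \sum_(i < n) v ord0 i = 1] =
      (fun v : 'rV[R]_n => \sum_(i < n) v ord0 i) @^-1` [set x | x = 1] by [].
  by apply: preimage_closed => [v _|]; [exact: sum_cont | exact: closed_eq].
have cQ : continuous Q.
  apply: (@continuous_big R^o 'I_n +%R 0 xpredT add_continuous) => i _.
  apply: (@continuous_big R^o 'I_n +%R 0 xpredT add_continuous) => j _.
  move=> v.
  apply: (@continuousM R 'rV[R]_n (fun v => v ord0 i * A i j) (fun v => v ord0 j));
    last exact: coord_continuous.
  apply: (@continuousM R 'rV[R]_n (fun v => v ord0 i) (fun=> A i j));
    [exact: coord_continuous | exact: cst_continuous].
have inK x : face n S x -> K (\row_(i < n) x (i : nat)).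
  move=> [H01 [Hsupp Hsum]]; split.
    move=> i; rewrite /Ci mxE; case: pselect => Si.
      have [/RleP a /RleP b] := H01 i (elimT ssrnat.ltP (ltn_ord i)).
      by rewrite /= in_itv /= a b.
    by rewrite /= (Hsupp i (elimT ssrnat.ltP (ltn_ord i)) Si).
  by rewrite /= (_ : 1 = rsum n x) // rsum_big; apply: eq_bigr => i _; rewrite mxE.
have [[v0 Kv0]|K0] := pselect (K !=set0); last first.
  exists 1%R; split; first exact: Rlt_0_1.
  by move=> x /inK Kx; exfalso; apply: K0; exists (\row_(i < n) x (i : nat)).
have [c cK' cmin] := EVT_min_rV (ex_intro _ v0 Kv0) cK (continuous_subspaceT cQ).
have [Kc1 Kc2] : K c by move: cK'; rewrite inE.
have Fc : face n S (xv c).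
  split; [|split].
  - move=> k /ssrnat.ltP kn; rewrite -[k]/(nat_of_ord (Ordinal kn)) xvE.
    have := Kc1 (Ordinal kn); rewrite /Ci; case: pselect => Sk /=.
      by rewrite in_itv /= => /andP[/RleP a /RleP b].
    by move=> ->; split; apply/RleP; [exact: lexx | exact: ler01].
  - move=> k /ssrnat.ltP kn Sk; rewrite -[k]/(nat_of_ord (Ordinal kn)) xvE.
    by have := Kc1 (Ordinal kn); rewrite /Ci; case: pselect.
  - by rewrite rsum_big (_ : 1%coqR = \sum_(i < n) c ord0 i) //;
      apply: eq_bigr => i _; rewrite xvE.
exists (Q c); split; first by rewrite -QE; exact: Hpos.
by move=> x Fx; apply/RleP; rewrite -QrowE; apply: cmin; rewrite inE; exact: inK.
Qed.
End FaceCompactness.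

(* If A is copositive and has no zero supported in S, then q(x) >= c (sum_i x_i)^2
   on the nonnegative vectors supported in S, for some c > 0 (by homogeneity from
   the minimum of q on the face spanned by S). *)
Lemma no_zero_lower_bound n A S : copositive n A ->
  (forall u, is_zero_of n A u -> supported n S u -> False) ->
  exists c, 0 < c /\ forall x, nonneg_vec n x -> supported n S x ->
    c * (rsum n x)^2 <= quad n A x.
Proof.
  intros [HS HC] Hno.
  destruct (FaceCompactness.face_quad_min n A S) as [c [Hc Hmin]].
  { intros x [H01 [Hsupp Hsum]].
    assert (Hx : nonneg_vec n x) by (intros i Hi; apply H01, Hi).
    destruct (HC x Hx) as [Hlt|Heq]; [exact Hlt|exfalso].
    apply (Hno x); [|exact Hsupp]. repeat split; auto.
    apply rsum_nonzero_term. lra. }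
  exists c. split; [exact Hc|]. intros x Hx Hsupp.
  set (s := rsum n x).
  assert (Hs : 0 <= s) by (apply rsum_nonneg, Hx).
  destruct (Req_dec s 0) as [E|E].
  { rewrite E. pose proof (HC x Hx). nra. }
  assert (Hface : face n S (fun k => / s * x k)).
  { split; [|split].
    - intros i Hi. pose proof (Hx i Hi). assert (x i <= s) by (apply rsum_ge_term; auto).
      split; [apply Rmult_le_pos; [apply Rlt_le, Rinv_0_lt_compat; lra|lra]|].
      apply (Rmult_le_reg_l s); [lra|]. field_simplify; lra.
    - intros i Hi HSi. rewrite (Hsupp i Hi HSi). ring.
    - rewrite rsum_scal. fold s. field. exact E. }
  pose proof (Hmin _ Hface) as Hc'. rewrite quad_scal in Hc'.
  apply (Rmult_le_reg_l ((/ s)^2)); [apply pow_lt, Rinv_0_lt_compat; lra|].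
  replace ((/ s)^2 * (c * s^2)) with c by (field; exact E). exact Hc'.
Qed.

(* A is "w-bounded on S" if g (w^T x)^2 <= q(x) for some g > 0 and all x >= 0
   supported in S; on the full index set this says that A - g w w^T is copositive. *)
Definition w_bounded (n : nat) (A : nat -> nat -> R) (w : nat -> R) (S : nat -> Prop) : Prop :=
  exists g, 0 < g /\ forall x, nonneg_vec n x -> supported n S x ->
    g * (dot n w x)^2 <= quad n A x.

(* Base case: without zeros supported in S, A is w-bounded on S, because
   (w^T x)^2 <= (sum_i |w_i|)^2 (sum_i x_i)^2. *)
Lemma no_zero_w_bounded n A w S : copositive n A ->
  (forall u, is_zero_of n A u -> supported n S u -> False) -> w_bounded n A w S.
Proof.
  intros HA Hno.
  destruct (no_zero_lower_bound n A S HA Hno) as [c [Hc Hbound]].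
  set (W := rsum n (fun i => Rabs (w i))).
  assert (HW : 0 <= W) by (apply rsum_nonneg; intros; apply Rabs_pos).
  exists (c / (W^2 + 1)). split; [apply Rdiv_lt_0_compat; nra|].
  intros x Hx Hsupp.
  pose proof (Hbound x Hx Hsupp) as Hq.
  pose proof (dot_abs_le n w x Hx) as Hd. fold W in Hd.
  set (s := rsum n x) in *. set (d := dot n w x) in *.
  assert (Hs : 0 <= s) by (apply rsum_nonneg, Hx).
  assert (Hd2 : d^2 <= (W * s)^2)
    by (rewrite <- pow2_abs; pose proof (Rabs_pos d); nra).
  assert (Hratio : c / (W^2 + 1) * (W * s)^2 <= c * s^2).
  { replace (c / (W^2 + 1) * (W * s)^2) with (c * s^2 * (W^2 / (W^2 + 1))) by (field; nra).
    assert (W^2 / (W^2 + 1) <= 1)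
      by (apply (Rmult_le_reg_l (W^2 + 1)); [nra|field_simplify; nra]).
    assert (0 <= c * s^2) by nra. nra. }
  assert (0 < c / (W^2 + 1)) by (apply Rdiv_lt_0_compat; nra).
  nra.
Qed.

Lemma min_ratio n (u y : nat -> R) : (exists i, (i < n)%nat /\ 0 < u i) ->
  exists i0, (i0 < n)%nat /\ 0 < u i0 /\
    forall i, (i < n)%nat -> 0 < u i -> y i0 / u i0 <= y i / u i.
Proof.
  induction n as [|n IH]; intros [i [Hi Hui]]; [lia|].
  destruct (classic (exists j, (j < n)%nat /\ 0 < u j)) as [Hex|Hno].
  - destruct (IH Hex) as [i0 [Hi0 [Hu0 Hmin]]].
    destruct (Rlt_dec 0 (u n)) as [Hun|Hun];
      [destruct (Rle_dec (y i0 / u i0) (y n / u n)) as [Hle|Hgt]|].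
    + exists i0. repeat split; auto. intros k Hk Huk.
      destruct (Nat.eq_dec k n) as [->|]; [exact Hle|apply Hmin; auto; lia].
    + exists n. repeat split; auto. intros k Hk Huk.
      destruct (Nat.eq_dec k n) as [->|]; [lra|].
      assert (y i0 / u i0 <= y k / u k) by (apply Hmin; auto; lia). lra.
    + exists i0. repeat split; auto. intros k Hk Huk.
      destruct (Nat.eq_dec k n) as [->|]; [lra|apply Hmin; auto; lia].
  - exists n. repeat split; auto.
    + destruct (Nat.eq_dec i n) as [<-|]; [exact Hui|].
      exfalso. apply Hno. exists i. split; [lia|exact Hui].
    + intros k Hk Huk. destruct (Nat.eq_dec k n) as [->|]; [lra|].
      exfalso. apply Hno. exists k. split; [lia|exact Huk].
Qed.

Lemma uniform_constant (Q : nat -> R -> Prop) (l : list nat) :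
  (forall i g g', 0 < g' <= g -> Q i g -> Q i g') ->
  (forall i, In i l -> exists g, 0 < g /\ Q i g) ->
  exists g, 0 < g /\ forall i, In i l -> Q i g.
Proof.
  intros Hmono. induction l as [|a l IH]; intros Hex.
  - exists 1. split; [lra|]. intros i [].
  - destruct IH as [g1 [Hg1 H1]]; [intros i Hi; apply Hex; right; exact Hi|].
    destruct (Hex a (or_introl eq_refl)) as [g2 [Hg2 H2]].
    exists (Rmin g1 g2). split; [apply Rmin_pos; auto|].
    intros i [<-|Hi].
    + apply (Hmono a g2); [split; [apply Rmin_pos; auto|apply Rmin_r]|exact H2].
    + apply (Hmono i g1); [split; [apply Rmin_pos; auto|apply Rmin_l]|apply H1, Hi].
Qed.

(* Given y >= 0 supported in l, put
   t = min y_i / u_i and z = y - t u: then z >= 0 vanishes at the minimising index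
   i0, w^T z = w^T y, and q(y) = q(z) + 2 t u^T A z >= q(z) since u^T A z >= 0. *)
Lemma w_bounded_reduce n A w u (l : list nat) : copositive n A ->
  is_zero_of n A u -> supported n (fun k => In k l) u -> dot n w u = 0 ->
  (forall i, In i l -> w_bounded n A w (fun k => In k (remove Nat.eq_dec i l))) ->
  w_bounded n A w (fun k => In k l).
Proof.
  intros HA [Hu [Hunz Hqu]] Hsu Hwu Hsmaller.
  destruct (uniform_constant (fun i g => forall x, nonneg_vec n x ->
      supported n (fun k => In k (remove Nat.eq_dec i l)) x ->
      g * (dot n w x)^2 <= quad n A x) l) as [g [Hg Hunif]].
  { intros i g g' Hg' Hbound x Hx Hsx. specialize (Hbound x Hx Hsx).
    assert (0 <= (dot n w x)^2) by nra. nra. }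
  { exact Hsmaller. }
  exists g. split; [exact Hg|]. intros y Hy Hsy.
  destruct (min_ratio n u y) as [i0 [Hi0 [Hui0 Hmin]]].
  { destruct Hunz as [i [Hi Hui]]. exists i. split; [exact Hi|].
    pose proof (Hu i Hi). lra. }
  set (t := y i0 / u i0).
  assert (Ht : 0 <= t) by (apply Rmult_le_pos; [apply Hy, Hi0|apply Rlt_le, Rinv_0_lt_compat, Hui0]).
  set (z := fun k => y k + (- t) * u k).
  assert (Hl0 : In i0 l) by (apply NNPP; intros Hn; rewrite (Hsu i0 Hi0 Hn) in Hui0; lra).
  assert (Hz : nonneg_vec n z).
  { intros k Hk. unfold z. destruct (Rlt_dec 0 (u k)) as [Hp|Hp].
    - pose proof (Hmin k Hk Hp) as Hm. fold t in Hm.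
      apply (Rmult_le_compat_r (u k)) in Hm; [|lra].
      replace (y k / u k * u k) with (y k) in Hm by (field; lra). lra.
    - assert (u k = 0) by (pose proof (Hu k Hk); lra). pose proof (Hy k Hk). nra. }
  assert (Hsz : supported n (fun k => In k (remove Nat.eq_dec i0 l)) z).
  { intros k Hk Hrm. unfold z. destruct (Nat.eq_dec k i0) as [->|Hne].
    - unfold t. field. lra.
    - assert (Hkl : ~ In k l) by (intros Hkl; apply Hrm, in_in_remove; auto).
      rewrite (Hsy k Hk Hkl), (Hsu k Hk Hkl). ring. }
  pose proof (Hunif i0 Hl0 z Hz Hsz) as Hgz.
  unfold z in Hgz. rewrite dot_shift, Hwu, Rmult_0_r, Rplus_0_r in Hgz.
  destruct HA as [HS HC].
  rewrite quad_shift, Hqu, bil_sym in Hgz by exact HS.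
  assert (0 <= bil n A u y) by (apply zero_pairing_nonneg; auto; split; auto).
  assert (0 <= t * bil n A u y) by (apply Rmult_le_pos; auto).
  nra.
Qed.

Lemma w_bounded_of_orthogonal_zeros n A w (l : list nat) : copositive n A ->
  (forall u, is_zero_of n A u -> supported n (fun k => In k l) u -> dot n w u = 0) ->
  w_bounded n A w (fun k => In k l).
Proof.
  intros HA. induction l as [l IH] using (induction_ltof1 _ (@length nat)).
  intros Horth.
  destruct (classic (exists u, is_zero_of n A u /\ supported n (fun k => In k l) u))
    as [[u [Hu Hsu]]|Hno].
  - apply (w_bounded_reduce n A w u l HA Hu Hsu (Horth u Hu Hsu)).
    intros i Hi. apply IH; [apply remove_length_lt, Hi|].
    intros v Hv Hsv. apply Horth; [exact Hv|].
    intros k Hk Hkl. apply Hsv; [exact Hk|]. intros Hrm. apply Hkl, (in_remove _ _ _ _ Hrm).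
  - apply no_zero_w_bounded; [exact HA|]. intros u Hu Hsu. apply Hno. exists u; auto.
Qed.

Theorem lemma4p3 (n : nat) (A : nat -> nat -> R) (w : nat -> R) :
  copositive n A -> nonzero_vec n w ->
  (irreducible_wrt n A (outer w) <->
   exists u, is_zero_of n A u /\ dot n w u <> 0).
Proof.
  intros HA _. pose proof HA as [HS HC]. split.
  - (* If all zeros were orthogonal to w, A would be w-bounded on all indices. *)
    intros Hirr. apply NNPP; intros Hno. apply Hirr.
    destruct (w_bounded_of_orthogonal_zeros n A w (seq 0 n) HA) as [g [Hg Hbound]].
    { intros u Hu _. apply NNPP; intros Hwu. apply Hno. exists u; auto. }
    exists g. split; [exact Hg|]. split.
    + intros i j Hi Hj. unfold mat_sub_scal, outer. rewrite (HS i j Hi Hj). ring.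
    + intros x Hx. rewrite quad_sub_outer.
      assert (g * (dot n w x)^2 <= quad n A x).
      { apply Hbound; [exact Hx|]. intros i Hi Hni. exfalso. apply Hni, in_seq. lia. }
      lra.
  - (* A zero u with w^T u <> 0 makes u^T (A - g w w^T) u = - g (w^T u)^2 < 0. *)
    intros [u [[Hu [_ Hq]] Hwu]] [g [Hg [_ Hcop]]].
    pose proof (Hcop u Hu) as Hpos. rewrite quad_sub_outer, Hq in Hpos.
    assert (0 < (dot n w u)^2) by (simpl; rewrite Rmult_1_r; apply Rsqr_pos_lt, Hwu).
    nra.
Qed.
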